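(* Let $\alpha\in\mathbb{Z}_2^n$ with $\alpha_{n-1}=0$. Then $\mathrm{adp}^{\oplus}(\overline{\alpha},\overline{\alpha}\to0)\le\mathrm{adp}^{\oplus}(\alpha,\alpha\to0)$.
   Context: For $x\in\mathbb{Z}_2^n$, $x=(x_0,\dots,x_{n-1})$ is identified with the integer $\sum_i x_i2^{n-1-i}$ ($x_{n-1}$ least significant); $+$ is addition modulo $2^n$, $\oplus$ is bitwise XOR, $\overline{x}$ is the bitwise complement. $\mathrm{adp}^{\oplus}(\alpha,\beta\to\gamma)=4^{-n}\#\{(x,y)\in(\mathbb{Z}_2^n)^2: (x+\alpha)\oplus(y+\beta)=(x\oplus y)+\gamma\}$. *)

From mathcomp Require Import all_boot all_algebra.
Set Implicit Arguments. Unset Strict Implicit. Unset Printing Implicit Defensive.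
Import GRing.Theory Num.Theory.

(* Z_2^n as n-tuples of bits x = (x_0,...,x_{n-1}); x_{n-1} least significant. *)
Definition bv (n : nat) := n.-tuple bool.

Definition bv_val n (x : bv n) : nat :=
  \sum_(i < n) (tnth x i : nat) * 2 ^ (n.-1 - i).

Definition bv_of_nat n (k : nat) : bv n :=
  [tuple odd (k %/ 2 ^ (n.-1 - i)) | i < n].

(* addition modulo 2^n *)
Definition bv_add n (x y : bv n) : bv n := bv_of_nat n (bv_val x + bv_val y).
Definition bv_xor n (x y : bv n) : bv n := [tuple tnth x i (+) tnth y i | i < n].
Definition bv_compl n (x : bv n) : bv n := [tuple ~~ tnth x i | i < n].
Definition bv0 n : bv n := [tuple false | i < n].

Definition adp_xor n (a b g : bv n) : rat :=
  (#|[set xy : bv n * bv n |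
       bv_xor (bv_add xy.1 a) (bv_add xy.2 b) == bv_add (bv_xor xy.1 xy.2) g]|%:R)
  / (4 ^ n)%:R.

From mathcomp Require Import all_boot all_algebra zify.
Import GRing.Theory Num.Theory.

(** Count the pairs (x, y) bit by bit from the least significant end.  Bit j
    of (x + a) xor (y + a) equals bit j of x xor y exactly when the carries
    entering position j are equal, so the count N_n(a, c) of pairs whose
    carries both start at c obeys a recursion in the low bit of a and in c.
    For a even, the carries out of position 0 vanish for all four choices of
    the low bits of x and y, giving N(a, 0) = 4 N(a/2, 0).  The complement of
    a is odd, so both carries out of position 0 equal the low bits of x and y,
    and complementing swaps the carry values: N(~a, 0) = N(a/2, 0) + N(a/2, 1).
    It remains that N(b, 1) <= 3 N(b, 0), which follows by induction together
    with the symmetric bound N(b, 0) <= 3 N(b, 1). *)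

Definition carry (b a c : bool) : bool := (b && a) || (c && (b || a)).

Lemma half_add_carry (X A : nat) (c : bool) :
  (X + A + c)./2 = X./2 + A./2 + carry (odd X) (odd A) c.
Proof.
rewrite /carry -!divn2; have := modn2 X; have := modn2 A.
by case: c; case: (odd X); case: (odd A) => /= hA hX; lia.
Qed.

Lemma carry_negb b a c : ~~ carry b (~~ a) c = carry (~~ b) a (~~ c).
Proof. by case: a; case: b; case: c. Qed.

Lemma divn_exp2S (m j : nat) : m %/ 2 ^ j.+1 = m./2 %/ 2 ^ j.
Proof. by rewrite expnS divnMA divn2. Qed.

Lemma half_exp2S_lt n A : A < 2 ^ n.+1 -> A./2 < 2 ^ n.
Proof. by rewrite expnS -divn2; lia. Qed.

Lemma odd_exp2S_compl n A : A < 2 ^ n.+1 -> odd (2 ^ n.+1 - 1 - A) = ~~ odd A.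
Proof.
move=> ltA; have := modn2 (2 ^ n.+1 - 1 - A); have := modn2 A.
have pos2n : 0 < 2 ^ n by rewrite expn_gt0.
move: ltA; rewrite expnS.
by case: (odd (2 * 2 ^ n - 1 - A)); case: (odd A) => /= ltA hA hC; lia.
Qed.

Lemma half_exp2S_compl n A : A < 2 ^ n.+1 -> (2 ^ n.+1 - 1 - A)./2 = 2 ^ n - 1 - A./2.
Proof.
have pos2n : 0 < 2 ^ n by rewrite expn_gt0.
by rewrite expnS -!divn2; lia.
Qed.

Lemma sum_nat_double (F : nat -> nat) m :
  \sum_(0 <= i < m.*2) F i = \sum_(0 <= i < m) (F i.*2 + F i.*2.+1).
Proof.
elim: m => [|m IHm]; first by rewrite !big_geq.
by rewrite doubleS !big_nat_recr //= IHm addnA.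
Qed.

Definition adp_event n A (c d : bool) X Y : bool :=
  all (fun j => odd ((X + A + c) %/ 2 ^ j) (+) odd ((Y + A + d) %/ 2 ^ j)
                == odd (X %/ 2 ^ j) (+) odd (Y %/ 2 ^ j)) (iota 0 n).

(* N_n(A, c) of the header is [adp_count n A c c]. *)
Definition adp_count n A c d : nat :=
  \sum_(0 <= X < 2 ^ n) \sum_(0 <= Y < 2 ^ n) adp_event n A c d X Y.

Lemma adp_eventS n A c d X Y : adp_event n.+1 A c d X Y =
  (c == d) && adp_event n A./2 (carry (odd X) (odd A) c) (carry (odd Y) (odd A) d) X./2 Y./2.
Proof.
rewrite /adp_event /= expn0 !divn1 !oddD -[iota 1 n]/(iota (1 + 0) n) iotaDl all_map.
congr andb.
  by case: c; case: d; case: (odd X); case: (odd Y); case: (odd A).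
by apply: eq_all => j /=; rewrite add1n !divn_exp2S !half_add_carry.
Qed.

Lemma adp_count0 A c d : adp_count 0 A c d = 1.
Proof. by rewrite /adp_count !big_nat1. Qed.

Lemma adp_countS n A c d : adp_count n.+1 A c d =
  (c == d) * (adp_count n A./2 (carry false (odd A) c) (carry false (odd A) d) +
              adp_count n A./2 (carry false (odd A) c) (carry true (odd A) d) +
              adp_count n A./2 (carry true (odd A) c) (carry false (odd A) d) +
              adp_count n A./2 (carry true (odd A) c) (carry true (odd A) d)).
Proof.
rewrite /adp_count expnS mul2n sum_nat_double.
under eq_bigr => X _ do rewrite !sum_nat_double.
have [<-|/negbTE neq_cd] := eqVneq c d; last first.
  rewrite mul0n big1 // => X _.
  by rewrite !big1 // => Y _; rewrite !adp_eventS neq_cd.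
under eq_bigr => X _ do rewrite !big_split /=.
rewrite mul1n !big_split /= -!addnA.
congr (_ + (_ + (_ + _))); apply: eq_bigr => X _; apply: eq_bigr => Y _.
all: by rewrite adp_eventS eqxx /= ?odd_double ?doubleK ?uphalf_double.
Qed.

Lemma adp_count_neq n A c d : c != d -> adp_count n.+1 A c d = 0.
Proof. by move=> /negbTE neq_cd; rewrite adp_countS neq_cd. Qed.

Lemma adp_count1 A c : adp_count 1 A c c = 4.
Proof. by rewrite adp_countS !adp_count0 eqxx. Qed.

Lemma adp_count_ratio n A :
  adp_count n.+1 A true true <= 3 * adp_count n.+1 A false false /\
  adp_count n.+1 A false false <= 3 * adp_count n.+1 A true true.
Proof.
elim: n A => [|n IHn] A; first by rewrite !adp_count1.
have [le_tf le_ft] := IHn A./2.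
rewrite !(adp_countS n.+1) !eqxx.
case: (odd A); rewrite /carry /= !(@adp_count_neq n _ false true) //.
all: by rewrite !(@adp_count_neq n _ true false) //; lia.
Qed.

Lemma adp_count_compl n A c d : A < 2 ^ n ->
  adp_count n (2 ^ n - 1 - A) c d = adp_count n A (~~ c) (~~ d).
Proof.
elim: n A c d => [|n IHn] A c d ltA; first by rewrite !adp_count0.
rewrite !adp_countS odd_exp2S_compl // half_exp2S_compl // !IHn ?half_exp2S_lt //.
rewrite !carry_negb (inj_eq negb_inj) /=.
by case: (odd A); case: c; case: d; rewrite /carry /=; lia.
Qed.

Lemma adp_count_compl_le n A : A < 2 ^ n.+1 -> ~~ odd A ->
  adp_count n.+1 (2 ^ n.+1 - 1 - A) false false <= adp_count n.+1 A false false.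
Proof.
case: n => [|n] ltA /negbTE evenA; first by rewrite !adp_count1.
rewrite !(adp_countS n.+1) odd_exp2S_compl // half_exp2S_compl // evenA.
rewrite !adp_count_compl ?half_exp2S_lt // /carry /=.
rewrite !(@adp_count_neq n _ false true) // !(@adp_count_neq n _ true false) //.
have [le_tf _] := adp_count_ratio n A./2; lia.
Qed.

Lemma sum_ord_rev (F : nat -> nat) n : \sum_(i < n) F (n.-1 - i) = \sum_(i < n) F i.
Proof.
rewrite (reindex_inj rev_ord_inj); apply: eq_bigr => -[i ltin] _ /=.
by congr F; lia.
Qed.

Lemma sum_binary_digits n X : X < 2 ^ n -> \sum_(j < n) odd (X %/ 2 ^ j) * 2 ^ j = X.
Proof.
elim: n X => [|n IHn] X ltX; first by rewrite big_ord0; move: ltX; rewrite expn0; lia.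
rewrite big_ord_recl expn0 divn1 muln1.
under eq_bigr => j _ do rewrite /bump /= ?add1n divn_exp2S expnS mulnCA.
by rewrite -big_distrr /= IHn ?half_exp2S_lt // mul2n odd_double_half.
Qed.

Lemma sum_exp2 n : \sum_(j < n) 2 ^ j = 2 ^ n - 1.
Proof.
elim: n => [|n IHn]; first by rewrite big_ord0.
have pos2n : 0 < 2 ^ n by rewrite expn_gt0.
by rewrite big_ord_recr /= IHn expnS; lia.
Qed.

Lemma bv_of_natK n X : X < 2 ^ n -> bv_val (bv_of_nat n X) = X.
Proof.
move=> ltX; rewrite /bv_val.
under eq_bigr => i _ do rewrite tnth_mktuple.
by rewrite (sum_ord_rev (fun j => odd (X %/ 2 ^ j) * 2 ^ j)) sum_binary_digits.
Qed.

Definition bv_of_ord {n} (X : 'I_(2 ^ n)) : bv n := bv_of_nat n X.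

Lemma bv_of_ord_bij n : bijective (@bv_of_ord n).
Proof.
apply: inj_card_bij; last by rewrite card_tuple card_bool card_ord.
by move=> X Y /(congr1 (@bv_val n)); rewrite !bv_of_natK // => /val_inj.
Qed.

Lemma bv_valK {n} (x : bv n) : bv_of_nat n (bv_val x) = x.
Proof. by have [g _ gK] := bv_of_ord_bij n; rewrite -(gK x) /bv_of_ord bv_of_natK. Qed.

Lemma bv_val_lt {n} (x : bv n) : bv_val x < 2 ^ n.
Proof. by have [g _ gK] := bv_of_ord_bij n; rewrite -(gK x) /bv_of_ord bv_of_natK. Qed.

Lemma odd_bv_val {n} (x : bv n) {i : 'I_n} : val i = n.-1 -> odd (bv_val x) = tnth x i.
Proof.
by move=> lsb_i; rewrite -{2}(bv_valK x) tnth_mktuple lsb_i subnn expn0 divn1.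
Qed.

Lemma bv_val0 n : bv_val (bv0 n) = 0.
Proof. by rewrite /bv_val big1 // => i _; rewrite tnth_mktuple. Qed.

Lemma bv_val_compl {n} (x : bv n) : bv_val (bv_compl x) = 2 ^ n - 1 - bv_val x.
Proof.
suff : bv_val x + bv_val (bv_compl x) = 2 ^ n - 1 by lia.
rewrite /bv_val -big_split /= -sum_exp2 -(sum_ord_rev (fun j => 2 ^ j)).
apply: eq_bigr => i _; rewrite tnth_mktuple.
by case: (tnth x i); rewrite /= ?mul0n ?mul1n ?addn0.
Qed.

Lemma forall_ord_rev (P : nat -> bool) n :
  [forall i : 'I_n, P (n.-1 - i)] = all P (iota 0 n).
Proof.
apply/forallP/allP => [Prev j|Piota i]; last first.
  by apply: Piota; rewrite mem_iota; have := ltn_ord i; lia.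
rewrite mem_iota add0n => /andP [_ ltjn].
by have := Prev (rev_ord (Ordinal ltjn)); rewrite /= (_ : n.-1 - (n - j.+1) = j) //; lia.
Qed.

Lemma adp_eventE n (a : bv n) (X Y : 'I_(2 ^ n)) :
  (bv_xor (bv_add (bv_of_ord X) a) (bv_add (bv_of_ord Y) a)
     == bv_add (bv_xor (bv_of_ord X) (bv_of_ord Y)) (bv0 n))
  = adp_event n (bv_val a) false false X Y.
Proof.
rewrite /bv_add bv_val0 addn0 bv_valK /bv_of_ord !bv_of_natK //.
rewrite eqEtuple /adp_event -forall_ord_rev; apply: eq_forallb => i.
by rewrite !tnth_mktuple !addn0.
Qed.

Lemma card_adp_xor_set n (a : bv n) :
  #|[set xy : bv n * bv n |
       bv_xor (bv_add xy.1 a) (bv_add xy.2 a) == bv_add (bv_xor xy.1 xy.2) (bv0 n)]|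
  = adp_count n (bv_val a) false false.
Proof.
pose E x y := bv_xor (bv_add x a) (bv_add y a) == bv_add (bv_xor x y) (bv0 n).
rewrite cardsE -sum1_card big_mkcond -(pair_big predT predT (fun x y => E x y : nat)).
rewrite (reindex (@bv_of_ord n)) /=; last exact/onW_bij/bv_of_ord_bij.
rewrite /adp_count big_mkord; apply: eq_bigr => X _.
rewrite (reindex (@bv_of_ord n)) /=; last exact/onW_bij/bv_of_ord_bij.
by rewrite big_mkord; apply: eq_bigr => Y _; rewrite /E adp_eventE.
Qed.

Local Open Scope ring_scope.

Theorem lemma5 (n : nat) (alpha : bv n) (i : 'I_n) (hi : val i = n.-1)
  (h : tnth alpha i = false) :
  adp_xor (bv_compl alpha) (bv_compl alpha) (bv0 n) <= adp_xor alpha alpha (bv0 n).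
Proof.
case: n => [|n] in alpha i hi h *; first by have := ltn_ord i.
rewrite /adp_xor !card_adp_xor_set bv_val_compl.
rewrite ler_pM2r ?invr_gt0 ?ltr0n ?expn_gt0 // ler_nat.
by apply: adp_count_compl_le; rewrite ?bv_val_lt // (odd_bv_val alpha hi) h.
Qed.
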